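(* For every $t\in I$, $\tau\in(0,T-t)$ and $x\in\mathbb{R}^n$, $\widetilde Y(\tau,t,x)\subset\mathrm{cl}\,Y(t,x)$, where $\widetilde Y(\tau,t,x)=\bigcup_{u\in\mathcal{U}}\big(J(t,t+\tau,x,u)+V(t+\tau,x(t+\tau;t,x,u))\big)$.
   Context: Setting (MOC). Fix $T>0$, $I=[0,T]$, integers $n,m,p\ge1$, nonempty compact $U\subset\mathbb{R}^m$. $f:\mathbb{R}^n\times U\to\mathbb{R}^n$ continuous with $\|f(x_1,u)-f(x_2,u)\|\le K_f\|x_1-x_2\|$, $\|f(x,u)\|\le M_f$. $L:\mathbb{R}^n\times U\to\mathbb{R}^p$ continuous, bounded, Lipschitz in $x$ uniformly in $u$. Controls $\mathcal{U}$: bounded Lebesgue measurable $u:I\to U$. $x(s;t,x,u)$ solves $\dot x=f(x,u(s))$ on $[t,T]$, $x(t)=x$; $J(t,t',x,u)=\int_t^{t'}L(x(s;t,x,u),u(s))ds$; $Y(t,x)=\{J(t,T,x,u):u\in\mathcal{U}\}$. $P\subset\mathbb{R}^p$: closed convex pointed cone containing $0$ with nonempty interior; $\mathcal{E}(S,P)=\{y\in S:(y-P)\cap S=\{y\}\}$; $V(t,x)=\mathcal{E}(\mathrm{cl}\,Y(t,x),P)$. *)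

From HB Require Import structures.
From mathcomp Require Import all_boot all_order all_algebra.
From mathcomp Require Import all_classical all_reals all_analysis.
Set Implicit Arguments. Unset Strict Implicit. Unset Printing Implicit Defensive.
Import Order.TTheory GRing.Theory Num.Theory.
Import numFieldNormedType.Exports.
Local Open Scope classical_set_scope.
Local Open Scope ring_scope.

Section MOC.
Variable R : realType.

Definition vint (q : nat) (g : R -> 'rV[R]_q) (a b : R) : 'rV[R]_q :=
  \row_k Rintegral lebesgue_measure `[a, b] (fun s => g s ord0 k).

Definition admissible (m : nat) (T : R) (U : set 'rV[R]_m) (u : R -> 'rV[R]_m) :=
  [/\ (forall s, 0 <= s <= T -> U (u s)),
      (forall k : 'I_m, measurable_fun `[0, T] (fun s => u s ord0 k)) &
      exists M : R, forall s, 0 <= s <= T -> `|u s| <= M].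

(* X is the (Caratheodory) solution of x' = f(x,u(s)) on [t,T] with X t = x *)
Definition traj (n m : nat) (T : R) (f : 'rV[R]_n -> 'rV[R]_m -> 'rV[R]_n)
  (u : R -> 'rV[R]_m) (t : R) (x : 'rV[R]_n) (X : R -> 'rV[R]_n) :=
  {within `[t, T], continuous X} /\
  forall s, t <= s <= T -> X s = x + vint (fun r => f (X r) (u r)) t s.

Definition Yset (n m p : nat) (T : R) (U : set 'rV[R]_m)
  (f : 'rV[R]_n -> 'rV[R]_m -> 'rV[R]_n) (L : 'rV[R]_n -> 'rV[R]_m -> 'rV[R]_p)
  (t : R) (x : 'rV[R]_n) : set 'rV[R]_p :=
  [set y | exists u, admissible T U u /\ exists X, traj T f u t x X /\
           y = vint (fun s => L (X s) (u s)) t T].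

Definition effset (p : nat) (S P : set 'rV[R]_p) : set 'rV[R]_p :=
  [set y | S y /\ ([set y - q | q in P] `&` S) = [set y]].

Definition Vset (n m p : nat) (T : R) (U : set 'rV[R]_m)
  (f : 'rV[R]_n -> 'rV[R]_m -> 'rV[R]_n) (L : 'rV[R]_n -> 'rV[R]_m -> 'rV[R]_p)
  (P : set 'rV[R]_p) (t : R) (x : 'rV[R]_n) : set 'rV[R]_p :=
  effset (closure (Yset T U f L t x)) P.

Definition Ytilde (n m p : nat) (T : R) (U : set 'rV[R]_m)
  (f : 'rV[R]_n -> 'rV[R]_m -> 'rV[R]_n) (L : 'rV[R]_n -> 'rV[R]_m -> 'rV[R]_p)
  (P : set 'rV[R]_p) (tau t : R) (x : 'rV[R]_n) : set 'rV[R]_p :=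
  [set y | exists u, admissible T U u /\ exists X, traj T f u t x X /\
     exists v, Vset T U f L P (t + tau) (X (t + tau)) v /\
       y = vint (fun s => L (X s) (u s)) t (t + tau) + v].

Definition ordering_cone (p : nat) (P : set 'rV[R]_p) :=
  [/\ closed P /\ P 0,
      (forall (l : R) a, 0 <= l -> P a -> P (l *: a)),
      (forall (l : R) a b, 0 <= l <= 1 -> P a -> P b -> P (l *: a + (1 - l) *: b)),
      (P `&` [set - q | q in P] = [set 0]) &
      interior P !=set0].
End MOC.

From HB Require Import structures.
From mathcomp Require Import all_boot all_order all_algebra.
From mathcomp Require Import all_classical all_reals all_analysis.
From mathcomp Require Import measurable_realfun.
From mathcomp Require Import lra.
Import Order.TTheory GRing.Theory Num.Theory.
Import numFieldNormedType.Exports.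
Local Open Scope classical_set_scope.
Local Open Scope ring_scope.

(* Splicing, at time t + tau, the control u with an admissible control started
   from X(t + tau) yields an admissible control from (t, x) whose trajectory and
   cost are the concatenations.  Hence
   J(t, t + tau, x, u) + Y(t + tau, X(t + tau)) lies in Y(t, x); translating
   closures and using V <= cl Y gives the claim.
   The analytic point is that the spliced cost integrals exist:
   s |-> L(X s, u s) is measurable because u is the pointwise limit of its
   nearest-point approximations in finer and finer finite nets of the compact
   set U. *)

Lemma within_continuous_comp_within (T1 T2 T3 : topologicalType)
  (A : set T1) (B : set T2) (g : T1 -> T2) (h : T2 -> T3) :
  (forall x, A x -> B (g x)) ->
  {within A, continuous g} -> {within B, continuous h} ->
  {within A, continuous (h \o g)}.
Proof.
move=> AB cg ch; apply/subspace_continuousP => x Ax W.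
have /(_ x Ax) cgx := (@subspace_continuousP _ A _ g).1 cg.
have /(_ (g x) (AB x Ax)) chx := (@subspace_continuousP _ B _ h).1 ch.
move=> /chx; rewrite /= nbhs_simpl => /cgx; rewrite /= nbhs_simpl => gW.
have : nbhs x (fun y => A y -> W (h (g y))).
  apply: filterS (gW : nbhs x (fun y => A y -> B (g y) -> W (h (g y)))).
  by move=> y Wy Ay; exact: Wy Ay (AB y Ay).
exact.
Qed.

Lemma within_continuous_pair_cst (T1 T2 T3 : topologicalType) (D : set T1)
  (g : T1 -> T2) (c : T3) :
  {within D, continuous g} -> {within D, continuous (fun s => (g s, c))}.
Proof.
move=> cg; apply/subspace_continuousP => s Ds.
have FD : Filter (within D (nbhs s)) by exact: within_filter.
apply: (@cvg_pair _ _ _ _ (nbhs (g s)) (nbhs c) FD _ _ g (fun=> c)).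
- exact: ((@subspace_continuousP _ D _ g).1 cg s Ds).
- exact: cvg_cst.
Qed.

Lemma within_continuous_cvg_seq (T1 T2 : topologicalType) (A : set T1)
  (h : T1 -> T2) (zs : nat -> T1) (z : T1) :
  {within A, continuous h} -> A z -> (forall j, A (zs j)) ->
  zs @ \oo --> z -> h \o zs @ \oo --> h z.
Proof.
move=> ch Az Azs zsz W hW.
have := (@subspace_continuousP _ A _ h).1 ch z Az W hW.
rewrite /= nbhs_simpl => hzW.
have : \forall j \near \oo, A (zs j) -> W (h (zs j)) :=
  zsz _ (hzW : nbhs z (fun y => A y -> W (h y))).
by apply: filterS => j; apply.
Qed.

Lemma closure_addl (K : numFieldType) (V : pseudoMetricNormedZmodType K)
  (A B : set V) (a v : V) :
  (forall q, A q -> B (a + q)) -> closure A v -> closure B (a + v).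
Proof.
move=> AB Av W /nbhs_ballP[e e0 eW].
have [q [Aq vq]] := Av _ (@nbhsx_ballx _ _ v e e0).
exists (a + q); split; first exact: AB.
by apply: eW; move: vq; rewrite -!ball_normE /= opprD addrACA subrr add0r.
Qed.

Section control_measurability.
Variables (R : realType) (m : nat).
Implicit Types (D : set R) (U : set 'rV[R]_m) (w : R -> 'rV[R]_m).

Lemma measurable_fun_bigmaxr D (I : Type) (s : seq I) (F : I -> R -> R) :
  measurable D -> (forall i, measurable_fun D (F i)) ->
  measurable_fun D (fun r => \big[Num.max/0]_(i <- s) F i r).
Proof.
move=> mD mF; elim: s => [|i s IH].
  by under eq_fun do rewrite big_nil; exact: measurable_cst.
by under eq_fun do rewrite big_cons; exact: measurable_maxr.
Qed.

Lemma measurable_fun_norm_subr D w (c : 'rV[R]_m) : measurable D ->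
  (forall k, measurable_fun D (fun s => w s ord0 k)) ->
  measurable_fun D (fun s => `|w s - c|).
Proof.
move=> mD mw.
have -> : (fun s => `|w s - c|) = (fun s =>
    \big[Num.max/0]_(ij : 'I_1 * 'I_m) `|w s ord0 ij.2 - c ord0 ij.2|).
  apply/funext => s; rewrite [LHS]mx_normrE; apply: eq_bigr => -[i j] _.
  by rewrite !mxE (ord1 i).
apply: measurable_fun_bigmaxr => // -[i j] /=.
by apply: measurableT_comp => //; exact: measurable_funB.
Qed.

Lemma compact_finite_net U (e : R) : compact U -> 0 < e ->
  exists cs : seq 'rV[R]_m, (forall c, c \in cs -> U c) /\
    forall v, U v -> exists2 c, c \in cs & `|v - c| < e.
Proof.
rewrite compact_cover => /(_ _ U (fun c => ball c e)) cU e0.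
have [||D DU Ucov] := cU.
- by move=> c _; exact: ball_open.
- by move=> v Uv; exists v => //; exact: ballxx.
exists (finmap.enum_fset D); split.
  by move=> c /DU; rewrite inE.
move=> v /Ucov[c /= cD cv]; exists c => //.
by move: cv; rewrite -ball_normE /= distrC.
Qed.

Fixpoint net_pick (c0 : 'rV[R]_m) (e : R) (cs : seq 'rV[R]_m) (v : 'rV[R]_m) :=
  if cs is c :: cs' then (if `|v - c| < e then c else net_pick c0 e cs' v)
  else c0.

Lemma net_pick_in U c0 e cs v :
  U c0 -> (forall c, c \in cs -> U c) -> U (net_pick c0 e cs v).
Proof.
move=> Uc0; elim: cs => [|c cs IH] //= csU.
case: ifP => _; first by apply: csU; rewrite inE eqxx.
by apply: IH => d dcs; apply: csU; rewrite inE dcs orbT.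
Qed.

Lemma net_pick_lt c0 e cs v :
  (exists2 c, c \in cs & `|v - c| < e) -> `|v - net_pick c0 e cs v| < e.
Proof.
elim: cs => [|c cs IH] /=; first by case.
case=> d; rewrite inE => /orP[/eqP -> vc|dcs vd]; first by rewrite vc.
by case: ifP => // _; apply: IH; exists d.
Qed.

Lemma measurable_fun_net_pick D U (G : R -> 'rV[R]_m -> R) w c0 e cs :
  measurable D -> (forall c, U c -> measurable_fun D (G ^~ c)) ->
  (forall k, measurable_fun D (fun s => w s ord0 k)) ->
  U c0 -> (forall c, c \in cs -> U c) ->
  measurable_fun D (fun s => G s (net_pick c0 e cs (w s))).
Proof.
move=> mD mG mw Uc0; elim: cs => [|c cs IH] csU /=; first exact: mG.
have -> : (fun s => G s (if `|w s - c| < e then c else net_pick c0 e cs (w s)))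
    = (fun s => if `|w s - c| < e then G s c else G s (net_pick c0 e cs (w s))).
  by apply/funext => s; case: ifP.
apply: measurable_fun_if => //.
- by apply: measurable_fun_ltr => //; exact: measurable_fun_norm_subr.
- apply: (measurable_funS mD); first exact: subIsetl.
  by apply: mG; apply: csU; rewrite inE eqxx.
- apply: (measurable_funS mD); first exact: subIsetl.
  by apply: IH => d dcs; apply: csU; rewrite inE dcs orbT.
Qed.

Lemma cvg_net_pick c0 (cs : nat -> seq 'rV[R]_m) v :
  (forall j, exists2 c, c \in cs j & `|v - c| < j.+1%:R^-1) ->
  (fun j => net_pick c0 j.+1%:R^-1 (cs j) v) @ \oo --> v.
Proof.
move=> csv; apply/cvgrPdist_lt => e e0; near=> j.
move/lt_trans: (net_pick_lt c0 _ _ _ (csv j)); apply.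
by near: j; exact: (@near_infty_natSinv_lt R (PosNum e0)).
Unshelve. all: by end_near.
Qed.

Lemma measurable_fun_comp_control (n : nat) U
  (H : 'rV[R]_n * 'rV[R]_m -> R) (a b : R) (X : R -> 'rV[R]_n) w :
  compact U -> {within [set z | U z.2], continuous H} ->
  {within `[a, b], continuous X} -> (forall s, a <= s <= b -> U (w s)) ->
  (forall k, measurable_fun `[a, b] (fun s => w s ord0 k)) ->
  measurable_fun `[a, b] (fun s => H (X s, w s)).
Proof.
move=> cU cH cX wU mw.
have mD : measurable `[a, b] by exact: measurable_itv.
have [ab|ba] := leP a b; last first.
  rewrite set_itv_ge; last by rewrite bnd_simp -ltNge.
  exact: measurable_fun_set0.
have Uwa : U (w a) by apply: wU; rewrite lexx ab.
have /choice[cs csP] : forall j : nat, exists cs : seq 'rV[R]_m,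
    (forall c, c \in cs -> U c) /\
    forall v, U v -> exists2 c, c \in cs & `|v - c| < j.+1%:R^-1.
  by move=> j; apply: compact_finite_net; rewrite ?invr_gt0.
pose wj j s := net_pick (w a) j.+1%:R^-1 (cs j) (w s).
apply: (@measurable_fun_cvg _ _ R _ (fun j s => H (X s, wj j s))).
- move=> j; apply: (@measurable_fun_net_pick _ U (fun s c => H (X s, c))) => //.
  + move=> c Uc; apply: subspace_continuous_measurable_fun => //.
    apply: (@within_continuous_comp_within _ _ _ _ [set z | U z.2]) => //.
    exact: within_continuous_pair_cst.
  + exact: (csP j).1.
- move=> s abs.
  have Uws : U (w s) by apply: wU; move: abs; rewrite /= in_itv.
  apply: (@within_continuous_cvg_seq _ _ [set z | U z.2] H _ _ cH) => // [j|].
    by apply: net_pick_in => //; exact: (csP j).1.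
  apply: (@cvg_pair _ _ _ _ (nbhs (X s)) (nbhs (w s)) _ _ _ (fun=> X s)).
    exact: cvg_cst.
  by apply: cvg_net_pick => j; apply: (csP j).2.
Qed.

Lemma integrable_comp_control (n : nat) U (H : 'rV[R]_n * 'rV[R]_m -> R)
  (M a b : R) (X : R -> 'rV[R]_n) w :
  compact U -> {within [set z | U z.2], continuous H} ->
  (forall z, U z.2 -> `|H z| <= M) ->
  {within `[a, b], continuous X} -> (forall s, a <= s <= b -> U (w s)) ->
  (forall k, measurable_fun `[a, b] (fun s => w s ord0 k)) ->
  lebesgue_measure.-integrable `[a, b] (EFin \o (fun s => H (X s, w s))).
Proof.
move=> cU cH HM cX wU mw; apply: measurable_bounded_integrable.
- exact: measurable_itv.
- have /= -> := lebesgue_measure_itv `[a, b].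
  by case: ifP => _ //; exact: ltry.
- exact: measurable_fun_comp_control cU cH cX wU mw.
- exists M; split; first by rewrite num_real.
  move=> y My s; rewrite /= in_itv => /wU Uws.
  exact: le_trans (HM (X s, w s) Uws) (ltW My).
Qed.

End control_measurability.

Section spliced_integrals.
Variable R : realType.

Lemma Rintegral_itv_splice (g g1 g2 : R -> R) (a b c : R) : a <= b -> b <= c ->
  lebesgue_measure.-integrable `[a, c] (EFin \o g) ->
  lebesgue_measure.-integrable `[b, c] (EFin \o g2) ->
  {in `[a, b], g =1 g1} -> {in `]b, c], g =1 g2} ->
  \int[lebesgue_measure]_(x in `[a, c]) g x =
  \int[lebesgue_measure]_(x in `[a, b]) g1 x +
  \int[lebesgue_measure]_(x in `[b, c]) g2 x.
Proof.
move=> ab bc ig ig2 gg1 gg2.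
have := @Rintegral_itvB R g (BLeft a) (BRight c) b ig.
rewrite !bnd_simp => /(_ ab bc) /eqP; rewrite subr_eq => /eqP ->.
rewrite addrC; congr (_ + _).
  by apply: eq_Rintegral => r /set_mem /gg1.
rewrite -Rintegral_itv_obnd_cbnd; last first.
  by apply: integrableS ig2 => //; exact: subset_itv_oc_cc.
by apply: eq_Rintegral => r /set_mem /gg2.
Qed.

Lemma vint_eq_in (q : nat) (G1 G2 : R -> 'rV[R]_q) (a b : R) :
  {in `[a, b], G1 =1 G2} -> vint G1 a b = vint G2 a b.
Proof.
move=> G12; apply/rowP => k; rewrite !mxE.
by apply: eq_Rintegral => r /set_mem /G12 ->.
Qed.

Lemma vint_itv_splice (q : nat) (G G1 G2 : R -> 'rV[R]_q) (a b c : R) :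
  a <= b -> b <= c ->
  (forall k, lebesgue_measure.-integrable `[a, c] (EFin \o (G^~ ord0 ^~ k))) ->
  (forall k, lebesgue_measure.-integrable `[b, c] (EFin \o (G2^~ ord0 ^~ k))) ->
  {in `[a, b], G =1 G1} -> {in `]b, c], G =1 G2} ->
  vint G a c = vint G1 a b + vint G2 b c.
Proof.
move=> ab bc iG iG2 GG1 GG2; apply/rowP => k; rewrite !mxE.
apply: Rintegral_itv_splice => //.
- by move=> r /GG1 ->.
- by move=> r /GG2 ->.
Qed.

Lemma vint_point (q : nat) (G : R -> 'rV[R]_q) (a : R) : vint G a a = 0.
Proof. by apply/rowP => k; rewrite !mxE set_itv1 Rintegral_set1. Qed.

End spliced_integrals.

Section splicing.
Context {R : realType} {n m : nat} {T : R} {U : set 'rV[R]_m}.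
Hypothesis cU : compact U.

Lemma admissible_integrable {q : nat} {F : 'rV[R]_n -> 'rV[R]_m -> 'rV[R]_q}
  {M a b : R} {X : R -> 'rV[R]_n} {u : R -> 'rV[R]_m} :
  {within [set z | U z.2], continuous (fun z => F z.1 z.2)} ->
  (forall x v, U v -> `|F x v| <= M) ->
  admissible T U u -> 0 <= a -> b <= T -> {within `[a, b], continuous X} ->
  forall k, lebesgue_measure.-integrable `[a, b]
    (EFin \o (fun s => F (X s) (u s) ord0 k)).
Proof.
move=> cF FM [uU mu _] a0 bT cX k.
have subT : `[a, b] `<=` `[0, T] by apply: subset_itv; rewrite bnd_simp.
apply: (@integrable_comp_control R m n U (fun z => F z.1 z.2 ord0 k) M
  _ _ _ _ cU).
- apply: (@within_continuous_comp_within _ _ _ _ setT (fun z => F z.1 z.2)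
    (fun v : 'rV[R]_q => v ord0 k)) => //.
  by apply: continuous_subspaceT; exact: coord_continuous.
- move=> z Uz; apply: le_trans (FM _ _ Uz).
  by rewrite [leRHS]mx_normrE; apply/bigmax_geP; right; exists (ord0, k).
- exact: cX.
- by move=> s sab; apply/uU/subT; rewrite /= in_itv.
- by move=> j; exact: measurable_funS (measurable_itv _) subT (mu j).
Qed.

Definition splice {A : Type} (s0 : R) (g1 g2 : R -> A) : R -> A :=
  fun r => if r <= s0 then g1 r else g2 r.

Lemma splice_left {A : Type} s0 (g1 g2 : R -> A) r :
  r <= s0 -> splice s0 g1 g2 r = g1 r.
Proof. by rewrite /splice => ->. Qed.

Lemma splice_right {A : Type} s0 (g1 g2 : R -> A) r :
  s0 < r -> splice s0 g1 g2 r = g2 r.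
Proof. by rewrite /splice leNgt => ->. Qed.

Lemma admissible_splice s0 {u1 u2} :
  admissible T U u1 -> admissible T U u2 -> admissible T U (splice s0 u1 u2).
Proof.
move=> [u1U mu1 [M1 u1M]] [u2U mu2 [M2 u2M]]; split.
- by move=> s sT; rewrite /splice; case: ifP => _; [exact: u1U|exact: u2U].
- move=> k; have -> : (fun s => splice s0 u1 u2 s ord0 k) =
      (fun s => if s <= s0 then u1 s ord0 k else u2 s ord0 k).
    by apply/funext => s; rewrite /splice; case: ifP.
  apply: measurable_fun_if => //.
  + by apply: measurable_fun_ler => //; exact: measurable_cst.
  + exact: measurable_funS (measurable_itv _) (@subIsetl _ _ _) (mu1 k).
  + exact: measurable_funS (measurable_itv _) (@subIsetl _ _ _) (mu2 k).
- exists (Num.max M1 M2) => s sT; rewrite /splice le_max.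
  by case: ifP => _; rewrite ?u1M ?u2M ?orbT.
Qed.

Lemma continuous_splice {t s0 : R} {X1 X2 : R -> 'rV[R]_n} :
  t <= s0 -> s0 <= T ->
  {within `[t, T], continuous X1} -> {within `[s0, T], continuous X2} ->
  X2 s0 = X1 s0 -> {within `[t, T], continuous (splice s0 X1 X2)}.
Proof.
move=> ts0 s0T cX1 cX2 X12.
have -> : `[t, T]%classic = `[t, s0] `|` `[s0, T].
  apply/seteqP; split=> r /=; rewrite !in_itv /=; last first.
    by case=> /andP[? ?]; apply/andP; split; lra.
  move=> /andP[tr rT]; case: (leP r s0) => rs0; first by left; rewrite tr.
  by right; rewrite rT ltW.
apply: withinU_continuous; [exact: itv_closed|exact: itv_closed| |].
- apply: (@subspace_eq_continuous _ `[t, s0] _ X1).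
    move=> r; rewrite inE /= in_itv /= /from_subspace /=.
    by move=> /andP[_ /splice_left ->].
  by apply: continuous_subspaceW cX1; apply: subset_itv; rewrite bnd_simp.
- apply: (@subspace_eq_continuous _ `[s0, T] _ X2) => // r.
  rewrite inE /= in_itv /= => /andP[s0r _]; rewrite /from_subspace /=.
  have [rs0|/splice_right -> //] := leP r s0.
  have -> : r = s0 by apply/eqP; rewrite eq_le rs0 s0r.
  by rewrite splice_left.
Qed.

Lemma vint_splice {q : nat} {F : 'rV[R]_n -> 'rV[R]_m -> 'rV[R]_q} {M : R}
  {t s0 s : R} {X1 X2 : R -> 'rV[R]_n} {u1 u2 : R -> 'rV[R]_m} :
  {within [set z | U z.2], continuous (fun z => F z.1 z.2)} ->
  (forall x v, U v -> `|F x v| <= M) ->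
  0 <= t -> t <= s0 -> s0 <= s -> s <= T ->
  admissible T U u1 -> admissible T U u2 ->
  {within `[t, T], continuous X1} -> {within `[s0, T], continuous X2} ->
  X2 s0 = X1 s0 ->
  vint (fun r => F (splice s0 X1 X2 r) (splice s0 u1 u2 r)) t s =
  vint (fun r => F (X1 r) (u1 r)) t s0 + vint (fun r => F (X2 r) (u2 r)) s0 s.
Proof.
move=> cF FM t0 ts0 s0s sT au1 au2 cX1 cX2 X12.
have s0T : s0 <= T by lra.
have cX : {within `[t, s], continuous (splice s0 X1 X2)}.
  apply: continuous_subspaceW (continuous_splice ts0 s0T cX1 cX2 X12).
  by apply: subset_itv; rewrite bnd_simp.
have cX2s : {within `[s0, s], continuous X2}.
  by apply: continuous_subspaceW cX2; apply: subset_itv; rewrite bnd_simp.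
apply: vint_itv_splice => //.
- exact: admissible_integrable cF FM (admissible_splice _ au1 au2) t0 sT cX.
- by apply: admissible_integrable cF FM au2 _ sT cX2s; lra.
- by move=> r; rewrite in_itv /= => /andP[_ rs0]; rewrite !splice_left.
- by move=> r; rewrite in_itv /= => /andP[s0r _]; rewrite !splice_right.
Qed.

Context {p : nat} {f : 'rV[R]_n -> 'rV[R]_m -> 'rV[R]_n} {Mf : R}
  {L : 'rV[R]_n -> 'rV[R]_m -> 'rV[R]_p} {ML : R}.
Hypotheses (cf : {within [set z | U z.2], continuous (fun z => f z.1 z.2)})
  (fM : forall x v, U v -> `|f x v| <= Mf)
  (cL : {within [set z | U z.2], continuous (fun z => L z.1 z.2)})
  (LM : forall x v, U v -> `|L x v| <= ML).

Lemma traj_splice {t s0 : R} {x} {X1 X2 : R -> 'rV[R]_n} {u1 u2} :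
  0 <= t -> t <= s0 -> s0 <= T -> admissible T U u1 -> admissible T U u2 ->
  traj T f u1 t x X1 -> traj T f u2 s0 (X1 s0) X2 ->
  traj T f (splice s0 u1 u2) t x (splice s0 X1 X2).
Proof.
move=> t0 ts0 s0T au1 au2 [cX1 X1E] [cX2 X2E].
have X12 : X2 s0 = X1 s0 by rewrite X2E ?lexx ?s0T // vint_point addr0.
split; first exact: continuous_splice.
move=> s /andP[ts sT]; have [ss0|s0s] := leP s s0.
  rewrite splice_left // X1E ?ts ?sT //; congr (_ + _).
  apply: vint_eq_in => r; rewrite in_itv /= => /andP[_ rs].
  by rewrite !splice_left //; exact: le_trans rs ss0.
rewrite splice_right // X2E ?sT ?ltW // X1E ?ts0 ?s0T // -addrA.
by rewrite (vint_splice cf fM t0 ts0 (ltW s0s) sT au1 au2 cX1 cX2 X12).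
Qed.

Lemma Yset_splice {t s0 : R} {x} {X : R -> 'rV[R]_n} {u y} :
  0 <= t -> t <= s0 -> s0 <= T -> admissible T U u -> traj T f u t x X ->
  Yset T U f L s0 (X s0) y ->
  Yset T U f L t x (vint (fun s => L (X s) (u s)) t s0 + y).
Proof.
move=> t0 ts0 s0T au tX [u2 [au2 [X2 [tX2 ->]]]].
have X12 : X2 s0 = X s0 by rewrite tX2.2 ?lexx ?s0T // vint_point addr0.
exists (splice s0 u u2); split; first exact: admissible_splice.
exists (splice s0 X X2); split; first exact: traj_splice.
by rewrite (vint_splice cL LM t0 ts0 s0T (lexx T) au au2 tX.1 tX2.1 X12).
Qed.

End splicing.

Theorem lemma5p2 (R : realType) (n m p : nat) (T : R) (hT : 0 < T)
  (U : set 'rV[R]_m) (hUc : compact U) (hU0 : U !=set0)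
  (f : 'rV[R]_n -> 'rV[R]_m -> 'rV[R]_n)
  (hfc : {within [set z : 'rV[R]_n * 'rV[R]_m | U z.2],
            continuous (fun z => f z.1 z.2)})
  (Kf Mf : R)
  (hfL : forall x1 x2 u, U u -> `|f x1 u - f x2 u| <= Kf * `|x1 - x2|)
  (hfM : forall x u, U u -> `|f x u| <= Mf)
  (L : 'rV[R]_n -> 'rV[R]_m -> 'rV[R]_p)
  (hLc : {within [set z : 'rV[R]_n * 'rV[R]_m | U z.2],
            continuous (fun z => L z.1 z.2)})
  (KL ML : R)
  (hLL : forall x1 x2 u, U u -> `|L x1 u - L x2 u| <= KL * `|x1 - x2|)
  (hLM : forall x u, U u -> `|L x u| <= ML)
  (P : set 'rV[R]_p) (hP : ordering_cone P)
  (t : R) (ht : 0 <= t <= T) (tau : R) (htau : 0 < tau < T - t)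
  (x : 'rV[R]_n) :
  Ytilde T U f L P tau t x `<=` closure (Yset T U f L t x).
Proof.
move=> _ [u [au [X [tX [v [[clYv _] ->]]]]]].
have /andP[t0 _] := ht; have /andP[tau0 tauT] := htau.
apply: closure_addl clYv => y.
by apply: (Yset_splice hUc hfc hfM hLc hLM) => //; lra.
Qed.
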